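(* Let $d\ge1$ be an integer and $0<\lambda<1$. Let $\mathbf{v}(\cdot)=\{v_k(\cdot)\}_{k\ge0}$ be a solution, with $v_0(t)\equiv1$, of the differential system \[\frac{d}{dt}v_k(t)=\lambda(v_{k-1}(t)-v_k(t))-(1-v_{k+1}(t))^d+(1-v_{k}(t))^d,\qquad k=1,2,\dots\] with initial state $\mathbf{v}(0)\in U_o$. Then $\lim_{t\to\infty}v_k(t)=v^*_k$ for every $k=1,2,\dots$.
   Context: $U$ is the set of sequences $\mathbf{u}=\{u_k\}_{k\ge0}$ with $1=u_0\ge u_1\ge u_2\ge\cdots\ge 0$, and $U_o=\{\mathbf{u}\in U:\sum_{k\ge1}u_k<\infty\}$. The sequence $\mathbf{v}^*=\{v^*_k\}_{k\ge0}$ is defined by $v^*_0=1$ and $v^*_k=1-\sqrt[d]{1-\lambda v^*_{k-1}}$ for $k=1,2,\dots$. *)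

From Stdlib Require Import Reals.
From Coquelicot Require Import Coquelicot.
Open Scope R_scope.

Definition in_U (u : nat -> R) : Prop :=
  u 0%nat = 1 /\ (forall k, u (S k) <= u k) /\ (forall k, 0 <= u k).

Definition in_Uo (u : nat -> R) : Prop :=
  in_U u /\ ex_series (fun k => u (S k)).

Fixpoint vstar (d : nat) (lambda : R) (k : nat) : R :=
  match k with
  | O => 1
  | S k' => 1 - Rpower (1 - lambda * vstar d lambda k') (/ INR d)
  end.

(* Write e_k = v_k - v*_k and b_k = (1 - v*_k)^d - (1 - v_k)^d.  The fixed-point equation
   (1 - v*_{k+1})^d = 1 - lambda v*_k turns the system into
   e_k' = lambda (e_{k-1} - e_k) + b_{k+1} - b_k, where b_k has the sign of e_k and
   |e_k|^d <= |b_k| <= d |e_k|.  Hence the l1 error sum_{k<=N} |e_k| decreases at rate at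
   least |b_1|, up to a boundary term d |e_{N+1}|; the latter is uniformly small on bounded
   time intervals because the total mass sum_k v_k grows at most linearly from a finite
   initial value.  As the l1 error at time 1 is bounded, |b_1| cannot stay away from 0 on
   infinitely many windows, so v_1 -> v*_1.  If v_k and v_{k+1} converge, Barbalat's lemma
   gives v_{k+1}' -> 0, the equation then forces b_{k+2} -> 0, and so v_{k+2} -> v*_{k+2}. *)

From Stdlib Require Import Reals Lra Lia Psatz Classical.
From Coquelicot Require Import Coquelicot.
Open Scope R_scope.

Lemma pow_between_0_1 (p : R) (n : nat) : 0 <= p <= 1 -> 0 <= p ^ n <= 1.
Proof. intros Hp; induction n as [|n IH]; simpl; nra. Qed.

Lemma pow_le_base (p : R) (n : nat) : (1 <= n)%nat -> 0 <= p <= 1 -> p ^ n <= p.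
Proof.
  intros Hn Hp; destruct n as [|n]; [lia|].
  pose proof (pow_between_0_1 p n Hp); simpl; nra.
Qed.

Lemma Rpower_inv_INR_props (n : nat) (y : R) : (1 <= n)%nat -> 0 < y <= 1 ->
  0 < Rpower y (/ INR n) <= 1 /\ Rpower y (/ INR n) ^ n = y.
Proof.
  intros Hn Hy.
  assert (Hpow : Rpower y (/ INR n) ^ n = y).
  { rewrite <- Rpower_pow by apply exp_pos.
    rewrite Rpower_mult, Rinv_l by (apply not_0_INR; lia).
    apply Rpower_1; lra. }
  assert (Hpos : 0 < Rpower y (/ INR n)) by apply exp_pos.
  repeat split; auto.
  destruct (Rle_dec (Rpower y (/ INR n)) 1) as [|Hgt]; [assumption|].
  pose proof (Rlt_pow_R1 _ n (Rnot_le_lt _ _ Hgt) ltac:(lia)); lra.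
Qed.

Lemma pow_diff_mul_diff_ge0 (a c : R) (n : nat) : 0 <= a -> 0 <= c ->
  0 <= (a ^ n - c ^ n) * (a - c).
Proof.
  intros Ha Hc; destruct (Rle_dec c a).
  - assert (c ^ n <= a ^ n) by (apply pow_incr; lra); nra.
  - assert (a ^ n <= c ^ n) by (apply pow_incr; lra); nra.
Qed.

Lemma Rabs_pow_diff_le (a c : R) (n : nat) : 0 <= a <= 1 -> 0 <= c <= 1 ->
  Rabs (a ^ n - c ^ n) <= INR n * Rabs (a - c).
Proof.
  intros Ha Hc; induction n as [|n IH].
  - simpl; rewrite Rminus_diag, Rabs_R0; lra.
  - rewrite S_INR; simpl.
    replace (a * a ^ n - c * c ^ n) with (a * (a ^ n - c ^ n) + (a - c) * c ^ n) by ring.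
    pose proof (pow_between_0_1 c n Hc).
    eapply Rle_trans; [apply Rabs_triang|].
    rewrite !Rabs_mult, (Rabs_right a), (Rabs_right (c ^ n)) by lra.
    pose proof (Rabs_pos (a ^ n - c ^ n)); pose proof (Rabs_pos (a - c)); nra.
Qed.

Lemma pow_diff_le_diff_pow (a c : R) (n : nat) : (1 <= n)%nat -> 0 <= c <= a ->
  (a - c) ^ n <= a ^ n - c ^ n.
Proof.
  intros Hn Hca; induction n as [|n IH]; [lia|].
  destruct n as [|n]; [simpl; lra|].
  specialize (IH ltac:(lia)).
  change ((a - c) * (a - c) ^ S n <= a * a ^ S n - c * c ^ S n).
  assert (0 <= c ^ S n) by (apply pow_le; lra).
  assert (0 <= (a - c) ^ S n) by (apply pow_le; lra).
  nra.
Qed.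

Lemma pow_Rabs_diff_le (a c : R) (n : nat) : (1 <= n)%nat -> 0 <= a -> 0 <= c ->
  Rabs (a - c) ^ n <= Rabs (a ^ n - c ^ n).
Proof.
  intros Hn Ha Hc; destruct (Rle_dec c a) as [Hca|Hac].
  - assert (c ^ n <= a ^ n) by (apply pow_incr; lra).
    rewrite (Rabs_right (a - c)), (Rabs_right (a ^ n - c ^ n)) by lra.
    apply pow_diff_le_diff_pow; [assumption|lra].
  - assert (a ^ n <= c ^ n) by (apply pow_incr; lra).
    rewrite (Rabs_minus_sym a), (Rabs_minus_sym (a ^ n)).
    rewrite (Rabs_right (c - a)), (Rabs_right (c ^ n - a ^ n)) by lra.
    apply pow_diff_le_diff_pow; [assumption|lra].
Qed.

Lemma sum_f_R0_telescope (a : nat -> R) (N : nat) :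
  sum_f_R0 (fun k => a k - a (S k)) N = a 0%nat - a (S N).
Proof. induction N as [|N IH]; simpl; [|rewrite IH]; ring. Qed.

Lemma sum_f_R0_le_Series (a : nat -> R) (N : nat) :
  ex_series a -> (forall n, 0 <= a n) -> sum_f_R0 a N <= Series a.
Proof.
  intros Ha Hpos; apply growing_ineq.
  - intros n; simpl; pose proof (Hpos (S n)); lra.
  - apply is_series_Reals, Series_correct, Ha.
Qed.

Lemma is_derive_sum_f_R0 (f df : nat -> R -> R) (N : nat) (x : R) :
  (forall k, (k <= N)%nat -> is_derive (f k) x (df k x)) ->
  is_derive (fun t => sum_f_R0 (fun k => f k t) N) x (sum_f_R0 (fun k => df k x) N).
Proof.
  induction N as [|N IH]; intros Hf; simpl; [apply Hf; lia|].
  apply (is_derive_plus (fun t => sum_f_R0 (fun k => f k t) N) (f (S N)));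
    [apply IH; intros k Hk|]; apply Hf; lia.
Qed.

Lemma filterlim_sum_f_R0 {F : (R -> Prop) -> Prop} {FF : Filter F}
  (f : nat -> R -> R) (l : nat -> R) (N : nat) :
  (forall k, filterlim (f k) F (locally (l k))) ->
  filterlim (fun t => sum_f_R0 (fun k => f k t) N) F (locally (sum_f_R0 l N)).
Proof.
  intros Hf; induction N as [|N IH]; simpl; [apply Hf|].
  apply (filterlim_comp_2 _ _ Rplus IH (Hf (S N)) (filterlim_plus _ _)).
Qed.

Lemma mvt_le (f df : R -> R) (a b M : R) : a <= b ->
  (forall t, a <= t <= b -> is_derive f t (df t)) ->
  (forall t, a <= t <= b -> df t <= M) -> f b - f a <= M * (b - a).
Proof.
  intros Hab Hd HM; destruct (Req_dec a b) as [->|Hne]; [lra|].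
  destruct (MVT_gen f a b df) as [c [Hc ->]];
    rewrite ?Rmin_left, ?Rmax_right in * by lra.
  - intros x Hx; apply Hd; lra.
  - intros x Hx; apply continuity_pt_filterlim, (ex_derive_continuous f).
    exists (df x); apply Hd; lra.
  - apply Rmult_le_compat_r; [lra|]; apply HM; lra.
Qed.

Lemma mvt_le_right_cont (f df : R -> R) (a b M : R) : a < b ->
  (forall t, a < t <= b -> is_derive f t (df t)) ->
  (forall t, a < t <= b -> df t <= M) ->
  filterlim f (at_right a) (locally (f a)) -> f b - f a <= M * (b - a).
Proof.
  intros Hab Hd HM Hc; apply Rle_plus_epsilon; intros eps Heps.
  set (C := Rabs M + 1).
  assert (HC : 0 < C) by (unfold C; pose proof (Rabs_pos M); lra).
  destruct (proj1 (filterlim_locally f (f a)) Hc (mkposreal (eps / 2) ltac:(lra)))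
    as [del Hdel].
  set (h := Rmin del (Rmin (eps / (2 * C)) (b - a)) / 2).
  assert (Hh : 0 < h /\ h < del /\ h <= eps / (2 * C) /\ h < b - a).
  { assert (0 < eps / (2 * C)) by (apply Rdiv_lt_0_compat; lra).
    pose proof (cond_pos del).
    pose proof (Rmin_l del (Rmin (eps / (2 * C)) (b - a))).
    pose proof (Rmin_r del (Rmin (eps / (2 * C)) (b - a))).
    pose proof (Rmin_l (eps / (2 * C)) (b - a)); pose proof (Rmin_r (eps / (2 * C)) (b - a)).
    assert (0 < Rmin del (Rmin (eps / (2 * C)) (b - a))) by (repeat apply Rmin_pos; lra).
    unfold h; lra. }
  assert (Hnear : Rabs (f (a + h) - f a) < eps / 2).
  { apply (Hdel (a + h)); [|lra].
    apply (Rabs_lt_between' (a + h) a del); lra. }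
  assert (Hrest : f b - f (a + h) <= M * (b - (a + h))).
  { apply (mvt_le f df); [lra| |]; intros t Ht; [apply Hd|apply HM]; lra. }
  assert (Hshift : - M * h <= C * h) by (unfold C; pose proof (Rle_abs (- M)); rewrite Rabs_Ropp in *; nra).
  assert (C * h <= eps / 2).
  { replace (eps / 2) with (C * (eps / (2 * C))) by (field; lra).
    apply Rmult_le_compat_l; lra. }
  pose proof (Rle_abs (f (a + h) - f a)); nra.
Qed.

Definition smooth_abs (eps x : R) : R := sqrt (x ^ 2 + eps ^ 2).

Lemma is_derive_smooth_abs (eps x : R) : 0 < eps ->
  is_derive (smooth_abs eps) x (x / smooth_abs eps x).
Proof.
  intros Heps; unfold smooth_abs.
  assert (0 < sqrt (x ^ 2 + eps ^ 2)) by (apply sqrt_lt_R0; nra).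
  auto_derive; [nra|].
  replace (x * (x * 1) + eps * (eps * 1)) with (x ^ 2 + eps ^ 2) by ring.
  field; lra.
Qed.

Lemma smooth_abs_bounds (eps x : R) : 0 < eps ->
  Rabs x <= smooth_abs eps x <= Rabs x + eps.
Proof.
  intros Heps; unfold smooth_abs.
  assert (Hsq : sqrt (x ^ 2 + eps ^ 2) * sqrt (x ^ 2 + eps ^ 2) = x ^ 2 + eps ^ 2)
    by (apply sqrt_sqrt; nra).
  pose proof (sqrt_pos (x ^ 2 + eps ^ 2)).
  assert (Rabs x * Rabs x = x ^ 2) by (rewrite <- Rabs_mult, Rabs_right; nra).
  pose proof (Rabs_pos x); split; nra.
Qed.

(* [x / smooth_abs eps x] is a smooth substitute for the sign of [x]. *)
Lemma smooth_sign_bounds (eps c x y : R) : 0 < eps -> 0 <= c ->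
  let s := x / smooth_abs eps x in
  Rabs s <= 1 /\ Rabs x - eps <= s * x /\
  (0 <= y * x -> Rabs y <= c * Rabs x -> Rabs y - c * eps <= s * y).
Proof.
  intros Heps Hc s; destruct (smooth_abs_bounds eps x Heps) as [Hlo Hhi].
  set (r := smooth_abs eps x) in *.
  assert (Hr : 0 < r) by (unfold r, smooth_abs; apply sqrt_lt_R0; nra).
  assert (Hrr : r * r = x ^ 2 + eps ^ 2) by (unfold r, smooth_abs; apply sqrt_sqrt; nra).
  pose proof (Rabs_pos x); pose proof (Rabs_pos y).
  assert (Hxx : Rabs x * Rabs x = x ^ 2) by (rewrite <- Rabs_mult, Rabs_right; nra).
  split; [|split].
  - unfold s; rewrite Rabs_div, (Rabs_right r) by lra.
    apply Rmult_le_reg_r with r; [lra|].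
    unfold Rdiv; rewrite Rmult_assoc, Rinv_l by lra; lra.
  - unfold s; apply Rmult_le_reg_r with r; [lra|].
    replace (x / r * x * r) with (x ^ 2) by (field; lra); nra.
  - intros Hyx Hy.
    assert (Hyx' : y * x = Rabs y * Rabs x) by (rewrite <- Rabs_mult, Rabs_right; lra).
    unfold s; apply Rmult_le_reg_r with r; [lra|].
    replace (x / r * y * r) with (Rabs y * Rabs x) by (rewrite <- Hyx'; field; lra).
    assert (Rabs y * (r - Rabs x) <= c * Rabs x * eps) by nra.
    assert (c * eps * Rabs x <= c * eps * r) by (apply Rmult_le_compat_l; nra).
    lra.
Qed.

Lemma sum_sign_transport_le (s e b : nat -> R) (lam c eps : R) (N : nat) :
  0 <= lam -> e 0%nat = 0 ->
  (forall k, Rabs (s k) <= 1 /\ Rabs (e k) - eps <= s k * e k /\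
             Rabs (b k) - c * eps <= s k * b k) ->
  sum_f_R0 (fun k => s (S k) * (lam * (e k - e (S k)) + b (S (S k)) - b (S k))) N
  <= - lam * Rabs (e (S N)) + Rabs (b (S (S N))) - Rabs (b 1%nat)
     + eps * (lam + c) * INR (S N).
Proof.
  intros Hlam He0 Hs.
  apply Rle_trans with (sum_f_R0 (fun k =>
      (lam * Rabs (e k) - lam * Rabs (e (S k)))
      - (Rabs (b (S k)) - Rabs (b (S (S k)))) + eps * (lam + c)) N).
  - apply sum_Rle; intros k _.
    destruct (Hs (S k)) as [Hs1 [Hse Hsb]].
    assert (s (S k) * e k <= Rabs (e k)).
    { eapply Rle_trans; [apply Rle_abs|]; rewrite Rabs_mult.
      pose proof (Rabs_pos (e k)); nra. }
    assert (s (S k) * b (S (S k)) <= Rabs (b (S (S k)))).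
    { eapply Rle_trans; [apply Rle_abs|]; rewrite Rabs_mult.
      pose proof (Rabs_pos (b (S (S k)))); nra. }
    nra.
  - rewrite plus_sum, minus_sum, sum_cte.
    rewrite (sum_f_R0_telescope (fun k => lam * Rabs (e k))).
    rewrite (sum_f_R0_telescope (fun k => Rabs (b (S k)))).
    rewrite He0, Rabs_R0; lra.
Qed.

Definition cvg_infty (f : R -> R) (l : R) : Prop :=
  forall eps, 0 < eps -> exists T, forall t, T <= t -> Rabs (f t - l) < eps.

Lemma cvg_infty_is_lim (f : R -> R) (l : R) : cvg_infty f l -> is_lim f p_infty l.
Proof.
  intros Hf; apply is_lim_spec; intros eps.
  destruct (Hf eps (cond_pos eps)) as [T HT].
  exists T; intros t Ht; apply HT; lra.
Qed.

Lemma barbalat (f df : R -> R) (L M T0 : R) : 0 < M ->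
  (forall t, T0 < t -> is_derive f t (df t)) ->
  (forall s t, T0 < s -> T0 < t -> Rabs (df t - df s) <= M * Rabs (t - s)) ->
  cvg_infty f L -> cvg_infty df 0.
Proof.
  intros HM Hd Hlip Hf eta Heta.
  set (del := eta / (2 * M)).
  assert (Hdel : 0 < del) by (unfold del; apply Rdiv_lt_0_compat; lra).
  assert (HMdel : M * del = eta / 2) by (unfold del; field; lra).
  destruct (Hf (eta * del / 4)) as [T1 HT1]; [nra|].
  exists (Rmax T1 (T0 + del + 1)); intros t Ht.
  pose proof (Rmax_l T1 (T0 + del + 1)); pose proof (Rmax_r T1 (T0 + del + 1)).
  assert (Hstep : Rabs (f (t + del) - f t) < eta * del / 2).
  { pose proof (HT1 t ltac:(lra)); pose proof (HT1 (t + del) ltac:(lra)).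
    replace (f (t + del) - f t) with ((f (t + del) - L) - (f t - L)) by ring.
    eapply Rle_lt_trans; [apply Rabs_triang|]; rewrite Rabs_Ropp; lra. }
  (* The mean value theorem for [f - df t * id] on [t, t + del]. *)
  assert (Hlin : Rabs ((f (t + del) - df t * (t + del)) - (f t - df t * t))
                 <= eta / 2 * Rabs (t + del - t)).
  { apply (bounded_variation (fun s => f s - df t * s) (fun s => df s - df t));
    intros s Hs.
    replace (t + del - t) with del in Hs by ring.
    rewrite (Rabs_right del) in Hs by lra; apply Rabs_le_between' in Hs; split.
    - apply (is_derive_minus f (fun s => df t * s)); [apply Hd; lra|].
      auto_derive; [exact I|ring].
    - rewrite Rabs_minus_sym, <- HMdel; eapply Rle_trans; [apply Hlip; lra|].
      apply Rmult_le_compat_l; [lra|]; apply Rabs_le; lra. }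
  replace ((f (t + del) - df t * (t + del)) - (f t - df t * t))
    with ((f (t + del) - f t) - df t * del) in Hlin by ring.
  replace (t + del - t) with del in Hlin by ring.
  rewrite (Rabs_right del) in Hlin by lra.
  rewrite Rminus_0_r.
  assert (Hdf : Rabs (df t * del) < eta * del).
  { replace (df t * del) with ((f (t + del) - f t) - ((f (t + del) - f t) - df t * del)) by ring.
    eapply Rle_lt_trans; [apply Rabs_triang|]; rewrite Rabs_Ropp; lra. }
  rewrite Rabs_mult, (Rabs_right del) in Hdf by lra.
  apply Rmult_lt_reg_r with del; lra.
Qed.

Lemma cvg_infty_of_pow_le (f g : R -> R) (l : R) (n : nat) : (1 <= n)%nat ->
  (forall t, 0 <= t -> Rabs (f t - l) ^ n <= Rabs (g t)) ->
  cvg_infty g 0 -> cvg_infty f l.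
Proof.
  intros Hn Hfg Hg eta Heta.
  destruct (Hg (eta ^ n)) as [T HT]; [apply pow_lt; lra|].
  exists (Rmax T 0); intros t Ht.
  pose proof (Rmax_l T 0); pose proof (Rmax_r T 0).
  specialize (HT t ltac:(lra)); rewrite Rminus_0_r in HT.
  destruct (Rlt_le_dec (Rabs (f t - l)) eta) as [|Hge]; [assumption|].
  pose proof (pow_incr eta (Rabs (f t - l)) n ltac:(lra)).
  pose proof (Hfg t ltac:(lra)); lra.
Qed.

Section MeanField.

Variables (d : nat) (lambda : R).
Hypothesis Hd : (1 <= d)%nat.
Hypothesis Hlam : 0 < lambda < 1.

Local Notation vs := (vstar d lambda).

Lemma vstar_bounds (k : nat) : 0 <= vs k <= lambda ^ k.
Proof.
  induction k as [|k IH]; simpl vstar; [simpl; lra|].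
  pose proof (pow_between_0_1 lambda k ltac:(lra)).
  destruct (Rpower_inv_INR_props d (1 - lambda * vs k) Hd ltac:(nra)) as [Hr Hrd].
  pose proof (pow_le_base (Rpower (1 - lambda * vs k) (/ INR d)) d Hd ltac:(lra)).
  simpl; nra.
Qed.

Lemma vstar_le_1 (k : nat) : 0 <= vs k <= 1.
Proof.
  pose proof (vstar_bounds k); pose proof (pow_between_0_1 lambda k ltac:(lra)); lra.
Qed.

Lemma vstar_fixed_point (k : nat) : (1 - vs (S k)) ^ d = 1 - lambda * vs k.
Proof.
  pose proof (vstar_le_1 k); simpl vstar.
  replace (1 - (1 - Rpower (1 - lambda * vs k) (/ INR d)))
    with (Rpower (1 - lambda * vs k) (/ INR d)) by ring.
  apply Rpower_inv_INR_props; [assumption|nra].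
Qed.

Variable v : nat -> R -> R.
Hypothesis Hv0 : forall t, 0 <= t -> v 0%nat t = 1.
Hypothesis Hstate : forall t, 0 <= t -> in_U (fun k => v k t).
Hypothesis Hinit : in_Uo (fun k => v k 0).
Hypothesis Hcont0 : forall k, filterlim (v k) (at_right 0) (locally (v k 0)).

Definition drift (k : nat) (t : R) : R :=
  lambda * (v k t - v (S k) t) - (1 - v (S (S k)) t) ^ d + (1 - v (S k) t) ^ d.

Hypothesis Hode : forall k t, 0 < t -> is_derive (v (S k)) t (drift k t).

Lemma v_antitone (t : R) (k m : nat) : 0 <= t -> (k <= m)%nat -> v m t <= v k t.
Proof.
  intros Ht Hkm; destruct (Hstate t Ht) as [_ [Hdec _]].
  induction Hkm as [|m _ IH]; [lra|]; specialize (Hdec m); simpl in Hdec; lra.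
Qed.

Lemma v_between_0_1 (t : R) (k : nat) : 0 <= t -> 0 <= v k t <= 1.
Proof.
  intros Ht; destruct (Hstate t Ht) as [H0 [_ Hpos]]; simpl in *.
  split; [apply Hpos|]; rewrite <- H0; apply v_antitone; [assumption|lia].
Qed.

Lemma drift_bounds (k : nat) (t : R) : 0 <= t ->
  Rabs (drift k t) <= 1 /\ drift k t <= lambda * (v k t - v (S k) t).
Proof.
  intros Ht; unfold drift.
  pose proof (v_between_0_1 t k Ht); pose proof (v_between_0_1 t (S k) Ht).
  pose proof (v_between_0_1 t (S (S k)) Ht).
  pose proof (v_antitone t k (S k) Ht ltac:(lia)).
  pose proof (v_antitone t (S k) (S (S k)) Ht ltac:(lia)).
  assert ((1 - v (S k) t) ^ d <= (1 - v (S (S k)) t) ^ d) by (apply pow_incr; lra).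
  pose proof (pow_between_0_1 (1 - v (S k) t) d ltac:(lra)).
  pose proof (pow_between_0_1 (1 - v (S (S k)) t) d ltac:(lra)).
  split; [apply Rabs_le|]; nra.
Qed.

Lemma v_lipschitz (k : nat) (s t : R) : 0 < s -> 0 < t ->
  Rabs (v k t - v k s) <= Rabs (t - s).
Proof.
  intros Hs Ht; destruct k as [|k].
  { rewrite !Hv0, Rminus_diag, Rabs_R0 by lra; apply Rabs_pos. }
  assert (Hle : forall a b, 0 < a <= b -> Rabs (v (S k) a - v (S k) b) <= 1 * Rabs (a - b)).
  { intros a b Hab; apply (bounded_variation (v (S k)) (drift k)); intros u Hu.
    rewrite (Rabs_left1 (a - b)) in Hu by lra; apply Rabs_le_between' in Hu.
    split; [apply Hode | apply drift_bounds]; lra. }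
  destruct (Rle_dec s t).
  - rewrite Rabs_minus_sym, (Rabs_minus_sym t), <- Rmult_1_l; apply Hle; lra.
  - rewrite <- Rmult_1_l; apply Hle; lra.
Qed.

Definition init_mass : R := Series (fun k => v (S k) 0).

Lemma mass_le (N : nat) (t : R) : 0 < t ->
  sum_f_R0 (fun k => v (S k) t) N <= init_mass + t.
Proof.
  intros Ht.
  assert (Hinit_le : sum_f_R0 (fun k => v (S k) 0) N <= init_mass).
  { destruct Hinit as [_ Hser]; apply sum_f_R0_le_Series; [exact Hser|].
    intros n; apply v_between_0_1; lra. }
  (* The total mass grows at rate at most [lambda * v 0 = lambda]. *)
  assert (Hgrowth : sum_f_R0 (fun k => v (S k) t) N - sum_f_R0 (fun k => v (S k) 0) N
                    <= 1 * (t - 0)).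
  { apply (mvt_le_right_cont (fun s => sum_f_R0 (fun k => v (S k) s) N)
             (fun s => sum_f_R0 (fun k => drift k s) N)); [lra| | |].
    - intros s Hs; apply is_derive_sum_f_R0; intros k _; apply Hode; lra.
    - intros s Hs.
      apply Rle_trans with (sum_f_R0 (fun k => lambda * v k s - lambda * v (S k) s) N).
      { apply sum_Rle; intros k _; pose proof (drift_bounds k s ltac:(lra)); lra. }
      rewrite sum_f_R0_telescope, Hv0 by lra.
      pose proof (v_between_0_1 s (S N) ltac:(lra)); nra.
    - apply (filterlim_sum_f_R0 (fun k s => v (S k) s)); intros k; apply Hcont0. }
  lra.
Qed.

Lemma tail_le (N : nat) (t : R) : 0 < t -> INR (S N) * v (S N) t <= init_mass + t.
Proof.
  intros Ht; eapply Rle_trans; [|apply (mass_le N t Ht)].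
  rewrite Rmult_comm, <- sum_cte; apply sum_Rle; intros k Hk.
  apply v_antitone; [lra|lia].
Qed.

Definition err (k : nat) (t : R) : R := v k t - vs k.
Definition err_pow (k : nat) (t : R) : R := (1 - vs k) ^ d - (1 - v k t) ^ d.

Lemma err_0 (t : R) : 0 <= t -> err 0 t = 0.
Proof. intros Ht; unfold err; rewrite Hv0 by lra; simpl; ring. Qed.

Lemma drift_err (k : nat) (t : R) :
  drift k t = lambda * (err k t - err (S k) t) + err_pow (S (S k)) t - err_pow (S k) t.
Proof. unfold drift, err, err_pow; rewrite !vstar_fixed_point; ring. Qed.

Lemma is_derive_err (k : nat) (t : R) : 0 < t -> is_derive (err (S k)) t (drift k t).
Proof.
  intros Ht; replace (drift k t) with (drift k t - 0) by ring.
  apply (is_derive_minus (v (S k)) (fun _ => vs (S k))); [apply Hode; lra|].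
  apply (is_derive_const (vs (S k))).
Qed.

Lemma err_as_diff (k : nat) (t : R) : err k t = (1 - vs k) - (1 - v k t).
Proof. unfold err; ring. Qed.

Lemma err_pow_mul_err_ge0 (k : nat) (t : R) : 0 <= t -> 0 <= err_pow k t * err k t.
Proof.
  intros Ht; pose proof (vstar_le_1 k); pose proof (v_between_0_1 t k Ht).
  rewrite err_as_diff; apply pow_diff_mul_diff_ge0; lra.
Qed.

Lemma Rabs_err_pow_le (k : nat) (t : R) : 0 <= t ->
  Rabs (err_pow k t) <= INR d * Rabs (err k t).
Proof.
  intros Ht; pose proof (vstar_le_1 k); pose proof (v_between_0_1 t k Ht).
  rewrite err_as_diff; apply Rabs_pow_diff_le; lra.
Qed.

Lemma pow_Rabs_err_le (k : nat) (t : R) : 0 <= t ->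
  Rabs (err k t) ^ d <= Rabs (err_pow k t).
Proof.
  intros Ht; pose proof (vstar_le_1 k); pose proof (v_between_0_1 t k Ht).
  rewrite err_as_diff; apply pow_Rabs_diff_le; [assumption|lra|lra].
Qed.

Definition err_l1 (N : nat) (t : R) : R := sum_f_R0 (fun k => Rabs (err (S k) t)) N.

Lemma err_l1_ge0 (N : nat) (t : R) : 0 <= err_l1 N t.
Proof. apply cond_pos_sum; intros; apply Rabs_pos. Qed.

Lemma err_l1_at_1_le (N : nat) : err_l1 N 1 <= init_mass + 1 + / (1 - lambda).
Proof.
  apply Rle_trans with (sum_f_R0 (fun k => v (S k) 1) N + sum_f_R0 (fun k => lambda ^ k) N).
  - rewrite <- plus_sum; apply sum_Rle; intros k _; unfold err.
    pose proof (v_between_0_1 1 (S k) ltac:(lra)); pose proof (vstar_bounds (S k)).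
    pose proof (pow_between_0_1 lambda k ltac:(lra)); simpl in *.
    apply Rabs_le; nra.
  - pose proof (mass_le N 1 ltac:(lra)).
    rewrite tech3 by lra.
    pose proof (pow_between_0_1 lambda (S N) ltac:(lra)).
    assert (Hinv : 0 < / (1 - lambda)) by (apply Rinv_0_lt_compat; lra).
    unfold Rdiv; nra.
Qed.

Lemma smoothed_err_l1_step (N : nat) (eps a b beta gamma : R) : 0 < eps -> 0 < a <= b ->
  (forall t, a <= t <= b ->
     INR d * Rabs (err (S (S N)) t) <= beta /\ gamma <= Rabs (err_pow 1 t)) ->
  sum_f_R0 (fun k => smooth_abs eps (err (S k) b)) N
  - sum_f_R0 (fun k => smooth_abs eps (err (S k) a)) N
  <= (beta - gamma + eps * (lambda + INR d) * INR (S N)) * (b - a).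
Proof.
  intros Heps Hab Hbounds.
  apply (mvt_le (fun t => sum_f_R0 (fun k => smooth_abs eps (err (S k) t)) N)
           (fun t => sum_f_R0 (fun k => err (S k) t / smooth_abs eps (err (S k) t)
                                        * drift k t) N)); [lra| |].
  - intros t Ht.
    apply (is_derive_sum_f_R0 (fun k s => smooth_abs eps (err (S k) s))
             (fun k s => err (S k) s / smooth_abs eps (err (S k) s) * drift k s));
      intros k _; rewrite Rmult_comm.
    apply (is_derive_comp (smooth_abs eps) (err (S k)));
      [apply is_derive_smooth_abs | apply is_derive_err]; lra.
  - intros t Ht; destruct (Hbounds t Ht) as [Hbeta Hgamma].
    rewrite (sum_eq _ (fun k => err (S k) t / smooth_abs eps (err (S k) t)
      * (lambda * (err k t - err (S k) t) + err_pow (S (S k)) t - err_pow (S k) t)))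
      by (intros k _; now rewrite drift_err).
    eapply Rle_trans.
    { apply (sum_sign_transport_le (fun k => err k t / smooth_abs eps (err k t))
               (fun k => err k t) (fun k => err_pow k t) lambda (INR d) eps N).
      - lra.
      - apply err_0; lra.
      - intros k.
        destruct (smooth_sign_bounds eps (INR d) (err k t) (err_pow k t) Heps (pos_INR d))
          as [Hs1 [Hs2 Hs3]].
        repeat split; [exact Hs1 | exact Hs2 | apply Hs3].
        + apply err_pow_mul_err_ge0; lra.
        + apply Rabs_err_pow_le; lra. }
    pose proof (Rabs_err_pow_le (S (S N)) t ltac:(lra)).
    pose proof (Rabs_pos (err (S N) t)); nra.
Qed.

Lemma err_l1_step (N : nat) (a b beta gamma : R) : 0 < a <= b ->
  (forall t, a <= t <= b ->
     INR d * Rabs (err (S (S N)) t) <= beta /\ gamma <= Rabs (err_pow 1 t)) ->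
  err_l1 N b <= err_l1 N a + (beta - gamma) * (b - a).
Proof.
  intros Hab Hbounds.
  set (C := (lambda + INR d) * INR (S N) * (b - a) + INR (S N) + 1).
  assert (HC : 0 < C).
  { pose proof (pos_INR d); pose proof (pos_INR (S N)).
    assert (0 <= (lambda + INR d) * INR (S N) * (b - a))
      by (repeat apply Rmult_le_pos; lra).
    unfold C; lra. }
  apply Rle_plus_epsilon; intros eps Heps.
  set (eps' := eps / C).
  assert (Heps' : 0 < eps') by (apply Rdiv_lt_0_compat; lra).
  pose proof (smoothed_err_l1_step N eps' a b beta gamma Heps' Hab Hbounds) as Hsmooth.
  assert (Hb : err_l1 N b <= sum_f_R0 (fun k => smooth_abs eps' (err (S k) b)) N).
  { apply sum_Rle; intros k _; apply smooth_abs_bounds; lra. }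
  assert (Ha : sum_f_R0 (fun k => smooth_abs eps' (err (S k) a)) N
               <= err_l1 N a + eps' * INR (S N)).
  { unfold err_l1; rewrite <- sum_cte, <- plus_sum.
    apply sum_Rle; intros k _; apply smooth_abs_bounds; lra. }
  assert (Hslack : eps' * INR (S N) + eps' * (lambda + INR d) * INR (S N) * (b - a)
                   = eps' * C - eps') by (unfold C; ring).
  assert (eps' * C = eps) by (unfold eps'; field; lra).
  lra.
Qed.

Lemma err_pow_lower_near (k : nat) (t s eta : R) : 0 < t -> 0 < eta ->
  eta <= Rabs (err k t) -> t <= s <= t + eta / 2 -> (eta / 2) ^ d <= Rabs (err_pow k s).
Proof.
  intros Ht Heta Hfar Hs.
  assert (Hmove : Rabs (v k s - v k t) <= eta / 2).
  { eapply Rle_trans; [apply v_lipschitz; lra|]; rewrite Rabs_right; lra. }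
  assert (Hnear : eta / 2 <= Rabs (err k s)).
  { unfold err in *.
    pose proof (Rabs_triang (v k s - vs k) (- (v k s - v k t))).
    rewrite Rabs_Ropp in H.
    replace (v k s - vs k + - (v k s - v k t)) with (v k t - vs k) in H by ring; lra. }
  eapply Rle_trans; [|apply pow_Rabs_err_le; lra].
  apply pow_incr; lra.
Qed.

(* Each window on which [err_pow 1] stays away from 0 costs the error mass a fixed amount. *)
Lemma err_l1_drop (c w : R) : 0 < w ->
  (forall T, exists t, T <= t /\ forall s, t <= s <= t + w -> c <= Rabs (err_pow 1 s)) ->
  forall j : nat, exists T, 1 <= T /\ forall N beta,
    (forall s, 1 <= s <= T -> INR d * Rabs (err (S (S N)) s) <= beta) ->
    err_l1 N T <= err_l1 N 1 + beta * (T - 1) - INR j * c * w.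
Proof.
  intros Hw Hwindows j; induction j as [|j [T [HT IH]]].
  - exists 1; split; [lra|]; intros N beta _; simpl; lra.
  - destruct (Hwindows T) as [t [HTt Hc]].
    exists (t + w); split; [lra|]; intros N beta Hbeta.
    specialize (IH N beta ltac:(intros s Hs; apply Hbeta; lra)).
    assert (Hbefore : err_l1 N t <= err_l1 N T + (beta - 0) * (t - T)).
    { apply err_l1_step; [lra|]; intros s Hs; split; [apply Hbeta; lra | apply Rabs_pos]. }
    assert (Hwindow : err_l1 N (t + w) <= err_l1 N t + (beta - c) * (t + w - t)).
    { apply err_l1_step; [lra|]; intros s Hs; split; [apply Hbeta | apply Hc]; lra. }
    rewrite S_INR; lra.
Qed.

Lemma tail_err_small (T beta : R) : 1 <= T -> 0 < beta ->
  exists N, forall n s, (N <= n)%nat -> 1 <= s <= T -> INR d * Rabs (err n s) <= beta.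
Proof.
  intros HT Hbeta.
  assert (Hdpos : 0 < INR d) by (apply lt_0_INR; lia).
  set (q := beta / INR d).
  assert (Hq : 0 < q) by (apply Rdiv_lt_0_compat; lra).
  destruct (INR_archimed q (init_mass + T) Hq) as [N1 HN1].
  destruct (pow_lt_1_zero lambda ltac:(rewrite Rabs_right; lra) q Hq) as [N2 HN2].
  exists (S (Nat.max N1 N2)); intros n s Hn Hs; destruct n as [|m]; [lia|].
  pose proof (v_between_0_1 s (S m) ltac:(lra)).
  pose proof (vstar_bounds (S m)).
  assert (Hv : v (S m) s <= q).
  { pose proof (tail_le m s ltac:(lra)).
    assert (INR N1 <= INR (S m)) by (apply le_INR; lia).
    destruct (Rle_dec (v (S m) s) q) as [|Hgt]; [assumption|].
    pose proof (pos_INR N1).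
    assert (INR N1 * q <= INR (S m) * v (S m) s) by (apply Rmult_le_compat; lra).
    lra. }
  assert (Hvs : vs (S m) <= q).
  { specialize (HN2 (S m) ltac:(lia)).
    rewrite Rabs_right in HN2 by (apply Rle_ge, pow_le; lra); lra. }
  assert (Rabs (err (S m) s) <= q) by (unfold err; apply Rabs_le; lra).
  replace beta with (INR d * q) by (unfold q; field; lra).
  apply Rmult_le_compat_l; lra.
Qed.

(* If [v 1] did not converge, infinitely many disjoint windows would each decrease the
   bounded, nonnegative error mass by the same amount. *)
Lemma cvg_v1 : cvg_infty (v 1) (vs 1).
Proof.
  intros eta Heta; apply NNPP; intros Hno.
  set (w := eta / 2); set (c := w ^ d).
  assert (Hw : 0 < w) by (unfold w; lra).
  assert (Hc : 0 < c) by (apply pow_lt; lra).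
  assert (Hwindows : forall T, exists t, T <= t /\
            forall s, t <= s <= t + w -> c <= Rabs (err_pow 1 s)).
  { intros T; apply NNPP; intros Hnot; apply Hno.
    exists (Rmax T 1); intros t Ht.
    pose proof (Rmax_l T 1); pose proof (Rmax_r T 1).
    apply Rnot_le_lt; intros Hfar; apply Hnot.
    exists t; split; [lra|]; intros s Hs.
    apply (err_pow_lower_near 1 t s eta); [lra | lra | exact Hfar | exact Hs]. }
  set (B := init_mass + 1 + / (1 - lambda)).
  destruct (INR_archimed (c * w) (B + 1)) as [K HK]; [nra|].
  destruct (err_l1_drop c w Hw Hwindows K) as [T [HT Hdrop]].
  assert (HTinv : 0 < / T) by (apply Rinv_0_lt_compat; lra).
  destruct (tail_err_small T (/ T) HT HTinv) as [N HN].
  specialize (Hdrop N (/ T) (fun s Hs => HN (S (S N)) s ltac:(lia) Hs)).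
  pose proof (err_l1_at_1_le N) as Hstart; pose proof (err_l1_ge0 N T).
  assert (/ T * (T - 1) <= 1) by (rewrite Rmult_minus_distr_l, Rinv_l; nra).
  fold B in Hstart; nra.
Qed.

Lemma drift_lipschitz (k : nat) (s t : R) : 0 < s -> 0 < t ->
  Rabs (drift k t - drift k s) <= (2 * lambda + 2 * INR d) * Rabs (t - s).
Proof.
  intros Hs Ht.
  assert (Hpow : forall m, Rabs ((1 - v m t) ^ d - (1 - v m s) ^ d) <= INR d * Rabs (t - s)).
  { intros m; pose proof (v_between_0_1 t m ltac:(lra)); pose proof (v_between_0_1 s m ltac:(lra)).
    eapply Rle_trans; [apply Rabs_pow_diff_le; lra|].
    replace (1 - v m t - (1 - v m s)) with (- (v m t - v m s)) by ring; rewrite Rabs_Ropp.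
    apply Rmult_le_compat_l; [apply pos_INR | apply v_lipschitz; lra]. }
  assert (Hlin : Rabs ((v k t - v (S k) t) - (v k s - v (S k) s)) <= 2 * Rabs (t - s)).
  { replace ((v k t - v (S k) t) - (v k s - v (S k) s))
      with ((v k t - v k s) - (v (S k) t - v (S k) s)) by ring.
    eapply Rle_trans; [apply Rabs_triang|]; rewrite Rabs_Ropp.
    pose proof (v_lipschitz k s t Hs Ht); pose proof (v_lipschitz (S k) s t Hs Ht); lra. }
  unfold drift.
  replace (lambda * (v k t - v (S k) t) - (1 - v (S (S k)) t) ^ d + (1 - v (S k) t) ^ d
           - (lambda * (v k s - v (S k) s) - (1 - v (S (S k)) s) ^ d + (1 - v (S k) s) ^ d))
    with (lambda * ((v k t - v (S k) t) - (v k s - v (S k) s))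
          - ((1 - v (S (S k)) t) ^ d - (1 - v (S (S k)) s) ^ d)
          + ((1 - v (S k) t) ^ d - (1 - v (S k) s) ^ d)) by ring.
  pose proof (Hpow (S k)); pose proof (Hpow (S (S k))).
  assert (lambda * Rabs ((v k t - v (S k) t) - (v k s - v (S k) s))
          <= lambda * (2 * Rabs (t - s))) by (apply Rmult_le_compat_l; lra).
  eapply Rle_trans; [apply Rabs_triang|].
  eapply Rle_trans; [apply Rplus_le_compat_r, Rabs_triang|].
  rewrite Rabs_Ropp, Rabs_mult, (Rabs_right lambda) by lra.
  lra.
Qed.

Lemma cvg_err_pow_SS (k : nat) : cvg_infty (drift k) 0 ->
  cvg_infty (v k) (vs k) -> cvg_infty (v (S k)) (vs (S k)) ->
  cvg_infty (err_pow (S (S k))) 0.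
Proof.
  intros Hdrift Hk HSk eta Heta.
  set (K := 2 * lambda + INR d + 1).
  assert (HK : 0 < K) by (unfold K; pose proof (pos_INR d); lra).
  set (e0 := eta / K).
  assert (He0 : 0 < e0) by (apply Rdiv_lt_0_compat; lra).
  destruct (Hdrift e0 He0) as [T1 H1]; destruct (Hk e0 He0) as [T2 H2];
    destruct (HSk e0 He0) as [T3 H3].
  exists (Rmax (Rmax T1 T2) (Rmax T3 0)); intros t Ht.
  pose proof (Rmax_l (Rmax T1 T2) (Rmax T3 0)); pose proof (Rmax_r (Rmax T1 T2) (Rmax T3 0)).
  pose proof (Rmax_l T1 T2); pose proof (Rmax_r T1 T2);
    pose proof (Rmax_l T3 0); pose proof (Rmax_r T3 0).
  specialize (H1 t ltac:(lra)); specialize (H2 t ltac:(lra)); specialize (H3 t ltac:(lra)).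
  rewrite Rminus_0_r in *.
  (* Solve the equation for [v (S k)] for its only unknown term [err_pow (S (S k))]. *)
  replace (err_pow (S (S k)) t)
    with (drift k t - lambda * (err k t - err (S k) t) + err_pow (S k) t)
    by (rewrite drift_err; ring).
  assert (Herr : Rabs (err k t - err (S k) t) < 2 * e0).
  { eapply Rle_lt_trans; [apply Rabs_triang|]; rewrite Rabs_Ropp; unfold err; lra. }
  assert (lambda * Rabs (err k t - err (S k) t) <= lambda * (2 * e0))
    by (apply Rmult_le_compat_l; lra).
  assert (Rabs (err_pow (S k) t) <= INR d * e0).
  { eapply Rle_trans; [apply Rabs_err_pow_le; lra|].
    apply Rmult_le_compat_l; [apply pos_INR | unfold err; lra]. }
  assert (Heta_eq : eta = K * e0) by (unfold e0; field; lra).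
  eapply Rle_lt_trans; [apply Rabs_triang|].
  eapply Rle_lt_trans; [apply Rplus_le_compat_r, Rabs_triang|].
  rewrite Rabs_Ropp, Rabs_mult, (Rabs_right lambda) by lra.
  unfold K in Heta_eq; lra.
Qed.

Lemma cvg_v_SS (k : nat) : cvg_infty (v k) (vs k) -> cvg_infty (v (S k)) (vs (S k)) ->
  cvg_infty (v (S (S k))) (vs (S (S k))).
Proof.
  intros Hk HSk.
  (* Barbalat: [v (S k)] converges and its derivative is uniformly Lipschitz. *)
  assert (Hdrift : cvg_infty (drift k) 0).
  { apply (barbalat (v (S k)) (drift k) (vs (S k)) (2 * lambda + 2 * INR d) 0).
    - pose proof (pos_INR d); lra.
    - intros t Ht; apply Hode; lra.
    - intros s t Hs Ht; apply drift_lipschitz; lra.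
    - exact HSk. }
  apply (cvg_infty_of_pow_le _ (err_pow (S (S k))) _ d Hd).
  - intros t Ht; exact (pow_Rabs_err_le (S (S k)) t Ht).
  - apply cvg_err_pow_SS; assumption.
Qed.

Lemma cvg_v (k : nat) : cvg_infty (v k) (vs k).
Proof.
  assert (Hpair : forall k, cvg_infty (v k) (vs k) /\ cvg_infty (v (S k)) (vs (S k))).
  { induction k0 as [|k0 [Hk HSk]]; split; auto using cvg_v1, cvg_v_SS.
    intros eps Heps; exists 0; intros t Ht.
    rewrite Hv0 by lra; simpl; rewrite Rminus_diag, Rabs_R0; lra. }
  apply Hpair.
Qed.

End MeanField.

Theorem lemma3p1 (d : nat) (lambda : R) (v : nat -> R -> R)
  (Hd : (1 <= d)%nat)
  (Hlam : 0 < lambda < 1)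
  (Hv0 : forall t, 0 <= t -> v 0%nat t = 1)
  (Hstate : forall t, 0 <= t -> in_U (fun k => v k t))
  (Hinit : in_Uo (fun k => v k 0))
  (Hcont0 : forall k, filterlim (v k) (at_right 0) (locally (v k 0)))
  (Hode : forall (k : nat) (t : R), (1 <= k)%nat -> 0 < t ->
     is_derive (v k) t
       (lambda * (v (k - 1)%nat t - v k t)
        - (1 - v (S k) t) ^ d + (1 - v k t) ^ d)) :
  forall k : nat, (1 <= k)%nat ->
    is_lim (v k) p_infty (vstar d lambda k).
Proof.
  intros k _; apply cvg_infty_is_lim.
  apply (cvg_v d lambda Hd Hlam v Hv0 Hstate Hinit Hcont0).
  intros j t Ht; specialize (Hode (S j) t ltac:(lia) Ht).
  simpl in Hode; rewrite Nat.sub_0_r in Hode; exact Hode.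
Qed.
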